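(* Let $n\ge2$ and let $r_1,\dots,r_{N(n)}$ be the inflection points of the Hilbert curve $H_n$ (or of any image of $H_n$ under an invertible affine map). Then $\bar\kappa_k=0$ for all $2\le k\le N(n)-2$, and the sequence of first affine curvatures $(\kappa_2,\kappa_3,\dots,\kappa_{N(n)-2})$ equals the number sequence obtained by writing $1$, then the word $K_n$ with each letter replaced by its number string, then $1$. For example, for $n=2$ it is $1,-2,1,\tfrac12,-1,1,-1,2,1,-\tfrac12,1$.
   Context: The Hilbert curve at step $n$ is the polygon $H_n$ in the unit square defined recursively: $H_1$ has vertices $(\tfrac14,\tfrac14),(\tfrac14,\tfrac34),(\tfrac34,\tfrac34),(\tfrac34,\tfrac14)$; $H_{n+1}$ is the concatenation (in this order, joined by the connecting edges) of $f_1(H_n),f_2(H_n),f_3(H_n),f_4(H_n)$, where $f_1(x,y)=(\tfrac y2,\tfrac x2)$, $f_2(x,y)=(\tfrac x2,\tfrac y2+\tfrac12)$, $f_3(x,y)=(\tfrac x2+\tfrac12,\tfrac y2+\tfrac12)$, $f_4(x,y)=(1-\tfrac y2,\tfrac12-\tfrac x2)$, each copy traversed in the order inherited from $H_n$. The inflection points $r_1,\dots,r_{N(n)}$ of $H_n$ are the vertices of $H_n$, in order, after deleting every interior vertex whose two neighbouring vertices are collinear with it (endpoints kept). Affine curvatures: $t_k=r_{k+1}-r_k$, $[a,b]=a_1b_2-a_2b_1$, and for $2\le k\le N-2$ with $[t_{k-1},t_k]\ne0$, $\kappa_k=\dfrac{[t_k,t_{k+1}]}{[t_{k-1},t_k]}$,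 $\bar\kappa_k=\dfrac{[t_{k-1},t_{k+1}]}{[t_{k-1},t_k]}$. Letters and their number strings: $P=(-2,1,\tfrac12,-1,1,-1,2,1,-\tfrac12)$, $S=(2,1,-\tfrac12,1)$, $T=(3,1,\tfrac13)$, $U=(1,-2,1,\tfrac12)$, $V=(1,-1,1,-1,1)$. Words $K_n$ ($n\ge2$) over $\{P,S,T,U,V\}$: $K_2=P$; $K_{2m+1}=K_{2m}\,S\,K_{2m}\,T\,K_{2m}\,U\,K_{2m}$ for $m\ge1$; $K_{2m}=K_{2m-1}\,U\,K_{2m-1}\,V\,K_{2m-1}\,S\,K_{2m-1}$ for $m\ge2$ (so $K_3=PSPTPUP$). *)

From HB Require Import structures.
From mathcomp Require Import all_boot all_order all_algebra.
Set Implicit Arguments. Unset Strict Implicit. Unset Printing Implicit Defensive.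
Import Order.TTheory GRing.Theory Num.Theory.
Local Open Scope ring_scope.

Section Hilbert.
Variable R : realFieldType.
Definition pt := (R * R)%type.

Definition f1 (p : pt) : pt := (p.2 / 2, p.1 / 2).
Definition f2 (p : pt) : pt := (p.1 / 2, p.2 / 2 + 1 / 2).
Definition f3 (p : pt) : pt := (p.1 / 2 + 1 / 2, p.2 / 2 + 1 / 2).
Definition f4 (p : pt) : pt := (1 - p.2 / 2, 1 / 2 - p.1 / 2).

Definition H1 : seq pt := [:: (1/4, 1/4); (1/4, 3/4); (3/4, 3/4); (3/4, 1/4)].

(* hilb k = vertex list of H_(k+1) *)
Fixpoint hilb (k : nat) : seq pt :=
  match k with
  | 0 => H1
  | k'.+1 => let h := hilb k' in map f1 h ++ map f2 h ++ map f3 h ++ map f4 h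
  end.

Definition hilbert (n : nat) : seq pt := hilb n.-1.

Definition psub (p q : pt) : pt := (p.1 - q.1, p.2 - q.2).
Definition bracket (a b : pt) : R := a.1 * b.2 - a.2 * b.1.
Definition collinear (p q r : pt) : bool := bracket (psub q p) (psub r p) == 0.

Definition keep (s : seq pt) (i : nat) : bool :=
  (i == 0%N) || (i == (size s).-1) ||
  ~~ collinear (nth (0,0) s i.-1) (nth (0,0) s i) (nth (0,0) s i.+1).
Definition inflections (s : seq pt) : seq pt :=
  [seq nth (0,0) s i | i <- iota 0 (size s) & keep s i].

(* 1-indexed: r s k = r_k, tv s k = t_k = r_(k+1) - r_k *)
Definition r (s : seq pt) (k : nat) : pt := nth (0,0) s k.-1.
Definition tv (s : seq pt) (k : nat) : pt := psub (r s k.+1) (r s k).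
Definition kappa (s : seq pt) (k : nat) : R :=
  bracket (tv s k) (tv s k.+1) / bracket (tv s k.-1) (tv s k).
Definition kappabar (s : seq pt) (k : nat) : R :=
  bracket (tv s k.-1) (tv s k.+1) / bracket (tv s k.-1) (tv s k).

Definition affmap (a b c d e f : R) (p : pt) : pt :=
  (a * p.1 + b * p.2 + e, c * p.1 + d * p.2 + f).

Inductive letter := LP | LS | LT | LU | LV.

Definition numstring (l : letter) : seq R :=
  match l with
  | LP => [:: -2; 1; 1/2; -1; 1; -1; 2; 1; -(1/2)]
  | LS => [:: 2; 1; -(1/2); 1]
  | LT => [:: 3; 1; 1/3]
  | LU => [:: 1; -2; 1; 1/2]
  | LV => [:: 1; -1; 1; -1; 1]
  end.
End Hilbert.

(* Kw j = K_(j+2) *)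
Fixpoint Kw (j : nat) : seq letter :=
  match j with
  | 0 => [:: LP]
  | j'.+1 => let w := Kw j' in
      if ~~ odd j' then (* j+2 = j'+3 odd *) w ++ LS :: w ++ LT :: w ++ LU :: w
      else (* j+2 even, >= 4 *) w ++ LU :: w ++ LV :: w ++ LS :: w
  end.

Definition K (n : nat) : seq letter := Kw (n - 2).

Definition expected (R : realFieldType) (n : nat) : seq R :=
  1 :: flatten (map (@numstring R) (K n)) ++ [:: 1].

From HB Require Import structures.
From mathcomp Require Import all_boot all_order all_algebra.
From mathcomp Require Import ring zify.
Set Implicit Arguments. Unset Strict Implicit. Unset Printing Implicit Defensive.
Import Order.TTheory GRing.Theory Num.Theory.
Local Open Scope ring_scope.

(* H_(n+1) is made of four affine copies of H_n.  Invertible affine maps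
   multiply every bracket by the same nonzero constant, so they preserve
   collinearity and both curvatures, and both curvatures at r_k only depend on
   the window r_(k-1), r_k, r_(k+1), r_(k+2).  Hence the inflection points of
   H_(n+1) are those of the four copies of H_n (endpoints excluded) together
   with at most two vertices at each of the three seams, and its curvature
   sequence consists of four copies of that of H_n (without the first and
   last entries), separated by the curvatures of the windows straddling the
   seams.  Near its endpoints, H_n looks the same at every level, up to the
   scale 2^-(n+1) and a swap of coordinates depending on the parity of n; so
   each seam is the homothetic image of one of six fixed configurations, whose
   curvatures (the strings of S, T, U or of U, V, S) are computed once and for
   all over the rationals.  The rational case then transfers to any real
   field and any invertible affine image. *)

Definition window (R : realFieldType) := (pt R * pt R * pt R * pt R)%type.

Section Inflections.
Context {R : realFieldType}.
Implicit Types (p x y : pt R) (s t : seq (pt R)) (o : option (pt R)).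

Definition next_pt t o := if t is z :: _ then Some z else o.

Definition kept p y o : seq (pt R) :=
  if o is Some z then (if collinear p y z then [::] else [:: y]) else [:: y].

(* [inner_infl p s o] lists the points of [s] that are inflection points of
   [p :: s ++ o], where [o] is the vertex following [s], if any. *)
Fixpoint inner_infl p s o : seq (pt R) :=
  if s is y :: t then kept p y (next_pt t o) ++ inner_infl y t o else [::].

Definition infl s := if s is x :: t then x :: inner_infl x t None else [::].

Lemma inflections_from s j k : (0 < j)%N -> (j + k)%N = size s ->
  [seq nth (0, 0) s i | i <- iota j k & keep s i] =
  inner_infl (nth (0, 0) s j.-1) (drop j s) None.
Proof.
elim: k j => [|k IHk] j j_gt0 jk_s; first by rewrite drop_oversize // -jk_s addn0.
have j_lt : (j < size s)%N by rewrite -jk_s -addn1 leq_add2l.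
have keep_j : keep s j =
    (k == 0%N) || ~~ collinear (nth (0, 0) s j.-1) (nth (0, 0) s j) (nth (0, 0) s j.+1).
  have last_j : (j == (size s).-1) = (k == 0%N) by rewrite -jk_s; apply/eqP/eqP; lia.
  by rewrite /keep last_j; case: j j_gt0 {IHk jk_s j_lt last_j}.
rewrite (drop_nth (0, 0) j_lt) /= -(IHk j.+1) ?addSnnS //.
rewrite keep_j; case: k {IHk keep_j} jk_s => [|k] jk_s /=.
  by rewrite drop_oversize // -jk_s addn1.
rewrite (drop_nth (0, 0)) -?jk_s ?addnS ?ltnS ?leq_addr //=.
by case: collinear.
Qed.

Lemma inflectionsE s : inflections s = infl s.
Proof.
case: s => [|x t] //; rewrite /inflections /=.
by rewrite (@inflections_from (x :: t) 1 (size t)) // drop1.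
Qed.

Lemma inner_infl_cat p s t o :
  inner_infl p (s ++ t) o = inner_infl p s (next_pt t o) ++ inner_infl (last p s) t o.
Proof.
elim: s p => [|y s IHs] p //=.
by rewrite IHs catA; case: s {IHs}.
Qed.

Lemma infl_ends x s y :
  infl (x :: s ++ [:: y]) = x :: inner_infl x s (Some y) ++ [:: y].
Proof. by rewrite /= inner_infl_cat. Qed.

Definition window_at p s : seq (window R) :=
  if s is a :: b :: c :: _ then [:: (p, a, b, c)] else [::].

Fixpoint windows s : seq (window R) :=
  if s is p :: t then window_at p t ++ windows t else [::].

Lemma windows_small s : (size s <= 3)%N -> windows s = [::].
Proof. by case: s => [|a [|b [|c [|d s]]]]. Qed.

Lemma size_windows s : size (windows s) = (size s - 3)%N.
Proof.
elim: s => [|p t IHt] //=; rewrite size_cat IHt.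
by case: t {IHt} => [|a [|b [|c t]]] //=; rewrite !subSS subn0 add1n.
Qed.

Lemma nth_windows s i w0 x0 : (i < size s - 3)%N ->
  nth w0 (windows s) i = (nth x0 s i, nth x0 s i.+1, nth x0 s i.+2, nth x0 s i.+3).
Proof.
elim: s i => [|p t IHt] i //=.
case: t IHt => [|a [|b [|c t]]] IHt //= i_lt; case: i i_lt => [|i] i_lt //=.
by rewrite IHt //; move: i_lt => /=; lia.
Qed.

Lemma windows_cat_overlap s c t : size c = 3%N ->
  windows (s ++ c ++ t) = windows (s ++ c) ++ windows (c ++ t).
Proof.
move=> c3; elim: s => [|p s IHs] /=; first by rewrite (@windows_small c) ?c3.
rewrite IHs catA; congr (_ ++ _).
have : (3 <= size (s ++ c))%N by rewrite size_cat c3 leq_addl.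
by rewrite catA; case: (s ++ c) => [|a [|b [|d u]]].
Qed.

Lemma windows_link s (a j b : seq (pt R)) t : size a = 3%N -> size b = 3%N ->
  windows (s ++ a ++ j ++ b ++ t) =
  windows (s ++ a) ++ windows (a ++ j ++ b) ++ windows (b ++ t).
Proof.
move=> a3 b3.
by rewrite windows_cat_overlap // (catA a j) windows_cat_overlap // -catA.
Qed.

Lemma windows_four_blocks (g1 g2 g3 g4 : pt R -> pt R) (a s b j1 j2 j3 : seq (pt R)) :
  size a = 3%N -> size b = 3%N ->
  let blk g := map g (a ++ s ++ b) in
  windows (blk g1 ++ j1 ++ blk g2 ++ j2 ++ blk g3 ++ j3 ++ blk g4) =
  windows (blk g1) ++ windows (map g1 b ++ j1 ++ map g2 a) ++
  windows (blk g2) ++ windows (map g2 b ++ j2 ++ map g3 a) ++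
  windows (blk g3) ++ windows (map g3 b ++ j3 ++ map g4 a) ++ windows (blk g4).
Proof.
move=> a3 b3 blk; rewrite /blk !map_cat.
have sz g r : size r = 3%N -> size (map g r) = 3%N by rewrite size_map.
rewrite -!catA (catA (map g1 a)) windows_link ?sz // -!catA.
rewrite (catA (map g2 a)) windows_link ?sz // -!catA.
by rewrite (catA (map g3 a)) windows_link ?sz // -!catA.
Qed.

Definition wkappa (w : window R) : R :=
  let: (a, b, c, d) := w in
  bracket (psub c b) (psub d c) / bracket (psub b a) (psub c b).

(* the window of a vertex where [kappa] is defined and [kappabar] vanishes *)
Definition zigzag (w : window R) : bool :=
  let: (a, b, c, d) := w in
  (bracket (psub b a) (psub c b) != 0) && (bracket (psub b a) (psub d c) == 0).

Definition zigzag_curvatures (ws : seq (window R)) (ks : seq R) :=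
  all zigzag ws && (map wkappa ws == ks).

Lemma zigzag_curvatures_cat ws1 ws2 ks1 ks2 :
  zigzag_curvatures ws1 ks1 -> zigzag_curvatures ws2 ks2 ->
  zigzag_curvatures (ws1 ++ ws2) (ks1 ++ ks2).
Proof.
move=> /andP[z1 /eqP <-] /andP[z2 /eqP <-].
by rewrite /zigzag_curvatures all_cat z1 z2 map_cat eqxx.
Qed.

Lemma kappa_windows s :
  [seq kappa s k | k <- iota 2 (size s - 3)] = map wkappa (windows s).
Proof.
apply: (@eq_from_nth _ 0); first by rewrite !size_map size_iota size_windows.
move=> i; rewrite size_map size_iota => i_lt.
rewrite (nth_map 0%N) ?size_iota // (nth_map ((0, 0), (0, 0), (0, 0), (0, 0))) ?size_windows //.
by rewrite (nth_windows _ (0, 0)) // nth_iota.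
Qed.

Lemma kappabar_windows s : all zigzag (windows s) ->
  forall k, (2 <= k <= size s - 2)%N ->
    bracket (tv s k.-1) (tv s k) != 0 /\ kappabar s k = 0.
Proof.
move=> /(all_nthP ((0, 0), (0, 0), (0, 0), (0, 0))) zz k /andP[k_ge2 k_le].
case: k k_ge2 k_le => [|[|i]] // _ i_le.
have i_lt : (i < size (windows s))%N by rewrite size_windows; lia.
move: (zz i i_lt); rewrite (nth_windows _ (0, 0)) -?size_windows // => /andP[-> par].
by split=> //; rewrite /kappabar (eqP par) mul0r.
Qed.

End Inflections.

Section PointMaps.
Context {R1 R2 : realFieldType}.
Variable g : pt R1 -> pt R2.

Definition wmap (w : window R1) : window R2 :=
  let: (a, b, c, d) := w in (g a, g b, g c, g d).

Lemma windows_map s : windows (map g s) = map wmap (windows s).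
Proof.
by elim: s => [|p s IHs] //=; rewrite map_cat IHs; case: s {IHs} => [|a [|b [|c s]]].
Qed.

Definition collinear_preserving :=
  forall a b c, collinear (g a) (g b) (g c) = collinear a b c.

Hypothesis g_col : collinear_preserving.

Lemma kept_map p y o : kept (g p) (g y) (omap g o) = map g (kept p y o).
Proof. by case: o => [z|] //=; rewrite g_col; case: collinear. Qed.

Lemma inner_infl_map p s o :
  inner_infl (g p) (map g s) (omap g o) = map g (inner_infl p s o).
Proof.
elim: s p => [|y s IHs] p //=.
by rewrite map_cat IHs -kept_map; case: s {IHs}.
Qed.

Lemma infl_map s : infl (map g s) = map g (infl s).
Proof. by case: s => [|x s] //=; rewrite (inner_infl_map x s None). Qed.

End PointMaps.

Section Copies.
Context {R : realFieldType}.
Variables (x y x' y' : pt R) (H : seq (pt R)).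
Let X := x :: y :: H ++ [:: x'; y'].
Let M := inner_infl x (y :: H ++ [:: x']) (Some y').

Lemma infl_polygon : infl X = x :: M ++ [:: y'].
Proof. by rewrite -infl_ends /X /= -catA. Qed.

Lemma infl_polygon_inj s : infl X = x :: s ++ [:: y'] -> s = M.
Proof. by rewrite infl_polygon !cats1 => -[] /rcons_inj[]. Qed.

Definition joint (g h : pt R -> pt R) :=
  kept (g x') (g y') (Some (h x)) ++ kept (g y') (h x) (Some (h y)).

Section OneCopy.
Variable g : pt R -> pt R.
Hypothesis g_col : collinear_preserving g.

Lemma inner_infl_behead_copy t o :
  inner_infl (g x) (behead (map g X) ++ t) o =
  map g M ++ kept (g x') (g y') (next_pt t o) ++ inner_infl (g y') t o.
Proof.
have -> : behead (map g X) ++ t = map g (y :: H ++ [:: x']) ++ g y' :: t.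
  by rewrite /X /= !map_cat -!catA.
by rewrite inner_infl_cat -(inner_infl_map g_col) /= last_map /M last_cat.
Qed.

Lemma inner_infl_copy a t o :
  inner_infl a (map g X ++ t) o =
  kept a (g x) (Some (g y)) ++ map g M ++ kept (g x') (g y') (next_pt t o) ++
  inner_infl (g y') t o.
Proof. by rewrite [map g X]/= cat_cons /= -inner_infl_behead_copy. Qed.

End OneCopy.

Lemma infl_four_copies g1 g2 g3 g4 :
  collinear_preserving g1 -> collinear_preserving g2 ->
  collinear_preserving g3 -> collinear_preserving g4 ->
  infl (map g1 X ++ map g2 X ++ map g3 X ++ map g4 X) =
  g1 x :: map g1 M ++ joint g1 g2 ++ map g2 M ++ joint g2 g3 ++
          map g3 M ++ joint g3 g4 ++ map g4 M ++ [:: g4 y'].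
Proof.
move=> g1_col g2_col g3_col g4_col.
have -> : forall t, infl (map g1 X ++ t) =
    g1 x :: inner_infl (g1 x) (behead (map g1 X) ++ t) None by [].
rewrite inner_infl_behead_copy // !inner_infl_copy // -[map g4 X]cats0.
by rewrite inner_infl_copy //= /joint -!catA.
Qed.

End Copies.

Definition bracket_morph (R1 R2 : realFieldType) (phi : {rmorphism R1 -> R2})
    (c : R2) (g : pt R1 -> pt R2) :=
  forall p q p' q', bracket (psub (g p) (g q)) (psub (g p') (g q')) =
                    c * phi (bracket (psub p q) (psub p' q')).

Section BracketMorphism.
Variables (R1 R2 : realFieldType) (phi : {rmorphism R1 -> R2}).
Variables (c : R2) (g : pt R1 -> pt R2).
Hypotheses (c_neq0 : c != 0) (g_bracket : bracket_morph phi c g).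

Lemma bracket_morph_collinear : collinear_preserving g.
Proof.
by move=> a b d; rewrite /collinear g_bracket mulf_eq0 (negbTE c_neq0) fmorph_eq0.
Qed.

Lemma wkappa_wmap w : wkappa (wmap g w) = phi (wkappa w).
Proof.
case: w => [[[a b] d] e] /=.
by rewrite !g_bracket invfM mulrACA divff ?mul1r ?fmorph_div.
Qed.

Lemma zigzag_wmap w : zigzag (wmap g w) = zigzag w.
Proof.
case: w => [[[a b] d] e] /=.
by rewrite !g_bracket !mulf_eq0 (negbTE c_neq0) !fmorph_eq0.
Qed.

Lemma wkappas_map s :
  map wkappa (windows (map g s)) = map phi (map wkappa (windows s)).
Proof. by rewrite windows_map -!map_comp; apply: eq_map => w /=; rewrite wkappa_wmap. Qed.

Lemma zigzags_map s : all zigzag (windows (map g s)) = all zigzag (windows s).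
Proof. by rewrite windows_map all_map; apply: eq_all => w /=; rewrite zigzag_wmap. Qed.

End BracketMorphism.

Section AffineMaps.
Variable R : realFieldType.
Implicit Types g : pt R -> pt R.

Lemma affmap_bracket_morph (a b c d e f : R) :
  bracket_morph idfun (a * d - b * c) (affmap a b c d e f).
Proof. by move=> p q p' q'; rewrite /bracket /psub /affmap /=; ring. Qed.

Lemma eq_bracket_morph (phi : {rmorphism R -> R}) c (g h : pt R -> pt R) :
  g =1 h -> bracket_morph phi c g -> bracket_morph phi c h.
Proof. by move=> gh g_bracket p q p' q'; rewrite -!gh g_bracket. Qed.

Definition homothety (o : pt R) (u : R) : pt R -> pt R :=
  affmap u 0 0 u (o.1 - u * o.1) (o.2 - u * o.2).

Lemma affmap_homothety (a b c d e f : R) o u p :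
  affmap a b c d e f (homothety o u p) =
  homothety (affmap a b c d e f o) u (affmap a b c d e f p).
Proof. by rewrite /homothety /affmap /=; congr (_, _); ring. Qed.


Definition affine g :=
  exists a b c d e f, a * d - b * c != 0 /\ g =1 affmap a b c d e f.

Lemma affine_bracket_morph g : affine g -> exists2 c, c != 0 & bracket_morph idfun c g.
Proof.
move=> [a [b [c [d [e [f [det gE]]]]]]]; exists (a * d - b * c) => //.
by apply: eq_bracket_morph (affmap_bracket_morph _ _ _ _ _ _) => p; rewrite gE.
Qed.

Lemma affine_collinear g : affine g -> collinear_preserving g.
Proof. by case/affine_bracket_morph=> c; exact: bracket_morph_collinear. Qed.

Lemma affine_wkappas g : affine g ->
  forall s, map wkappa (windows (map g s)) = map wkappa (windows s).
Proof. by case/affine_bracket_morph=> c c0 gb s; rewrite (wkappas_map c0 gb) map_id. Qed.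

Lemma affine_zigzags g : affine g ->
  forall s, all zigzag (windows (map g s)) = all zigzag (windows s).
Proof. by case/affine_bracket_morph=> c c0 gb s; rewrite (zigzags_map c0 gb). Qed.

Lemma affine_zigzag_curvatures g : affine g -> forall s ks,
  zigzag_curvatures (windows (map g s)) ks = zigzag_curvatures (windows s) ks.
Proof.
by move=> g_aff s ks; rewrite /zigzag_curvatures affine_zigzags ?affine_wkappas.
Qed.

Lemma affine_homothety g : affine g ->
  forall o u p, g (homothety o u p) = homothety (g o) u (g p).
Proof. by move=> [a [b [c [d [e [f [_ gE]]]]]]] o u p; rewrite !gE affmap_homothety. Qed.

Lemma homothety_affine o u : u != 0 -> affine (homothety o u).
Proof. by move=> u0; do 6 eexists; split; last by []; rewrite !mul0r subr0 mulf_neq0. Qed.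

End AffineMaps.

Section Rationals.
Variable R : realFieldType.

Definition ratr_pt (p : pt rat) : pt R := (ratr p.1, ratr p.2).

Lemma ratr_pt_bracket_morph : bracket_morph ratr 1 ratr_pt.
Proof.
by move=> p q p' q'; rewrite mul1r /bracket /psub /ratr_pt /= !(rmorphB, rmorphM).
Qed.

Lemma hilb_ratr m : hilb R m = map ratr_pt (hilb rat m).
Proof.
elim: m => [|m IHm] /=; first by rewrite /ratr_pt /= !fmorph_div /= !rmorph1 !rmorph_nat.
rewrite IHm !map_cat -!map_comp; congr (_ ++ _ ++ _ ++ _); apply: eq_map => p;
  by rewrite /ratr_pt /f1 /f2 /f3 /f4 /=
       ?(rmorphB, rmorphD, fmorph_div, rmorph1, rmorph_nat).
Qed.

Lemma expected_ratr n : map ratr (expected rat n) = expected R n.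
Proof.
rewrite /expected /= map_cat /= rmorph1; congr (_ :: _ ++ _).
elim: (K n) => [|l k IHk] //=; rewrite map_cat IHk; congr (_ ++ _).
by case: l; rewrite /= ?(rmorphN, fmorph_div, rmorph1, rmorph_nat).
Qed.

End Rationals.

Section HilbertCurve.
Implicit Types (u : rat) (d : pt rat) (ev : bool).

Lemma pieces_affine :
  [/\ affine (@f1 rat), affine (@f2 rat), affine (@f3 rat) & affine (@f4 rat)].
Proof.
split.
- exists 0, (1 / 2), (1 / 2), 0, 0, 0; split=> [|p]; first by [].
  by rewrite /f1 /affmap /=; congr (_, _); ring.
- exists (1 / 2), 0, 0, (1 / 2), 0, (1 / 2); split=> [|p]; first by [].
  by rewrite /f2 /affmap /=; congr (_, _); ring.
- exists (1 / 2), 0, 0, (1 / 2), (1 / 2), (1 / 2); split=> [|p]; first by [].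
  by rewrite /f3 /affmap /=; congr (_, _); ring.
- exists 0, (-(1 / 2)), (-(1 / 2)), 0, 1, (1 / 2); split=> [|p]; first by [].
  by rewrite /f4 /affmap /=; congr (_, _); ring.
Qed.

Definition swap d : pt rat := (d.2, d.1).
Definition swap_if ev d := if ev then swap d else d.

Definition start_pt u d : pt rat := (u * d.1, u * d.2).
Definition end_pt u d : pt rat := (1 - u * d.1, u * d.2).

Lemma start_ptE u d : start_pt u d = homothety (0, 0) u (start_pt 1 d).
Proof. by rewrite /start_pt /homothety /affmap /=; congr (_, _); ring. Qed.

Lemma end_ptE u d : end_pt u d = homothety (1, 0) u (end_pt 1 d).
Proof. by rewrite /end_pt /homothety /affmap /=; congr (_, _); ring. Qed.

Lemma f1_start u d : f1 (start_pt u d) = start_pt (u / 2) (swap d).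
Proof. by rewrite /f1 /start_pt /swap /=; congr (_, _); field. Qed.

Lemma f4_end u d : f4 (end_pt u d) = end_pt (u / 2) (swap d).
Proof. by rewrite /f4 /end_pt /swap /=; congr (_, _); field. Qed.

Lemma swap_swap_if ev d : swap (swap_if ev d) = swap_if (~~ ev) d.
Proof. by case: ev; case: d. Qed.

Definition gap (m : nat) : rat := (2 ^+ m.+2)^-1.

Lemma gapS m : gap m.+1 = gap m / 2.
Proof. by rewrite /gap exprS invfM mulrC. Qed.

Lemma gap_neq0 m : gap m != 0.
Proof. by rewrite invr_eq0 expf_neq0. Qed.

Lemma hilb_ends m : let u := gap m in let ev := odd m in exists H,
  hilb rat m = [:: start_pt u (1, 1), start_pt u (swap_if ev (1, 3)) &
                H ++ [:: end_pt u (swap_if ev (1, 3)); end_pt u (1, 1)]].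
Proof.
elim: m => [|m [H IHm]] /=; first by exists [::]; apply/eqP; vm_compute.
set a := start_pt _ _ in IHm; set b := start_pt _ _ in IHm.
set c := end_pt _ _ in IHm; set d := end_pt _ _ in IHm.
exists (map (@f1 rat) (H ++ [:: c; d]) ++ map (@f2 rat) (hilb rat m) ++
        map (@f3 rat) (hilb rat m) ++
        map (@f4 rat) [:: a, b & H]).
rewrite {1 4}IHm /= !map_cat -!catA /= /a /b /c /d.
by rewrite gapS !f1_start !f4_end !swap_swap_if.
Qed.

(* For m >= 1, the three inflection points following the first vertex of
   H_(m+1) are [head_turns (odd m) (gap m)]; the three preceding its last vertex
   are their mirror images [tail_turns (odd m) (gap m)]. *)
Definition turn_offsets ev : seq (pt rat) :=
  [:: swap_if ev (1, 3); (3, 3); swap_if ev (3, 1)].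
Definition head_turns ev u := map (start_pt u) (turn_offsets ev).
Definition tail_turns ev u := map (end_pt u) (rev (turn_offsets ev)).

Lemma f1_head_turns ev u :
  map (@f1 rat) (head_turns ev u) = head_turns (~~ ev) (u / 2).
Proof. by rewrite /head_turns -map_comp; case: ev; rewrite /= !f1_start. Qed.

Lemma f4_tail_turns ev u :
  map (@f4 rat) (tail_turns ev u) = tail_turns (~~ ev) (u / 2).
Proof. by rewrite /tail_turns -map_comp; case: ev; rewrite /= !f4_end. Qed.

Definition junction ev u (f g : pt rat -> pt rat) :=
  joint (start_pt u (1, 1)) (start_pt u (swap_if ev (1, 3)))
        (end_pt u (swap_if ev (1, 3))) (end_pt u (1, 1)) f g.

(* The inflection points around the junction of the copies [f] and [g]; its
   windows are exactly the windows straddling that junction. *)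
Definition seam ev u (f g : pt rat -> pt rat) :=
  map f (tail_turns ev u) ++ junction ev u f g ++ map g (head_turns ev u).

Lemma seam_scale f g ev u : affine f -> affine g -> f (1, 0) = g (0, 0) -> u != 0 ->
  seam ev u f g = map (homothety (g (0, 0)) u) (seam ev 1 f g).
Proof.
move=> f_aff g_aff fg u0; set h := homothety _ u.
have h_col := affine_collinear (homothety_affine (g (0, 0)) u0).
have fE d : f (end_pt u d) = h (f (end_pt 1 d)).
  by rewrite end_ptE (affine_homothety f_aff) fg.
have gE d : g (start_pt u d) = h (g (start_pt 1 d)).
  by rewrite start_ptE (affine_homothety g_aff).
have hK p y z : kept (h p) (h y) (Some (h z)) = map h (kept p y (Some z)).
  exact: (kept_map h_col p y (Some z)).
rewrite /seam /junction /joint /head_turns /tail_turns !map_cat -!map_comp.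
rewrite !fE !gE !hK; congr (_ ++ _ ++ _); apply: eq_map => d /=; by rewrite ?fE ?gE.
Qed.

Lemma seam_scale_curvatures f g ev u ks : affine f -> affine g ->
  f (1, 0) = g (0, 0) -> u != 0 ->
  zigzag_curvatures (windows (seam ev 1 f g)) ks ->
  zigzag_curvatures (windows (seam ev u f g)) ks.
Proof.
move=> f_aff g_aff fg u0; have h_aff := homothety_affine (g (0, 0)) u0.
by rewrite (seam_scale _ f_aff g_aff fg u0) (affine_zigzag_curvatures h_aff).
Qed.

Definition seam_letters ev := if ev then (LS, LT, LU) else (LU, LV, LS).

Lemma seams_ok ev u : u != 0 -> let: (l1, l2, l3) := seam_letters ev in
  [/\ zigzag_curvatures (windows (seam ev u (@f1 rat) (@f2 rat))) (numstring rat l1),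
      zigzag_curvatures (windows (seam ev u (@f2 rat) (@f3 rat))) (numstring rat l2) &
      zigzag_curvatures (windows (seam ev u (@f3 rat) (@f4 rat))) (numstring rat l3)].
Proof.
move=> u0; have [a1 a2 a3 a4] := pieces_affine.
have j12 : f1 (1, 0) = f2 (0, 0) :> pt rat by apply/eqP; vm_compute.
have j23 : f2 (1, 0) = f3 (0, 0) :> pt rat by apply/eqP; vm_compute.
have j34 : f3 (1, 0) = f4 (0, 0) :> pt rat by apply/eqP; vm_compute.
by case: ev; split; apply: seam_scale_curvatures; try assumption; vm_compute.
Qed.

Definition four_copies ev u (M : seq (pt rat)) :=
  map (@f1 rat) M ++ junction ev u (@f1 rat) (@f2 rat) ++
  map (@f2 rat) M ++ junction ev u (@f2 rat) (@f3 rat) ++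
  map (@f3 rat) M ++ junction ev u (@f3 rat) (@f4 rat) ++ map (@f4 rat) M.

Lemma infl_hilbS m M :
  infl (hilb rat m) = start_pt (gap m) (1, 1) :: M ++ [:: end_pt (gap m) (1, 1)] ->
  infl (hilb rat m.+1) =
    start_pt (gap m.+1) (1, 1) ::
    four_copies (odd m) (gap m) M ++ [:: end_pt (gap m.+1) (1, 1)].
Proof.
have [H hilbE] := hilb_ends m; have [a1 a2 a3 a4] := pieces_affine.
rewrite {1}hilbE => /infl_polygon_inj ->.
rewrite [hilb _ _]/= hilbE.
rewrite infl_four_copies; try exact: affine_collinear.
by rewrite gapS f1_start f4_end /four_copies /junction -!catA.
Qed.

Lemma four_copiesE ev u Mid :
  four_copies ev u (head_turns ev u ++ Mid ++ tail_turns ev u) =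
  head_turns (~~ ev) (u / 2) ++
    (map (@f1 rat) Mid ++ seam ev u (@f1 rat) (@f2 rat) ++
     map (@f2 rat) Mid ++ seam ev u (@f2 rat) (@f3 rat) ++
     map (@f3 rat) Mid ++ seam ev u (@f3 rat) (@f4 rat) ++ map (@f4 rat) Mid) ++
  tail_turns (~~ ev) (u / 2).
Proof. by rewrite /four_copies /seam !map_cat f1_head_turns f4_tail_turns -!catA. Qed.

Lemma four_copies_curvatures ev u Mid ks : u != 0 ->
  let M := head_turns ev u ++ Mid ++ tail_turns ev u in
  zigzag_curvatures (windows M) ks ->
  let: (l1, l2, l3) := seam_letters ev in
  zigzag_curvatures (windows (four_copies ev u M))
    (ks ++ numstring rat l1 ++ ks ++ numstring rat l2 ++ ks ++ numstring rat l3 ++ ks).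
Proof.
move=> u0 M M_ok; have [a1 a2 a3 a4] := pieces_affine.
have := seams_ok ev u0; case: seam_letters => [[l1 l2] l3] [s12 s23 s34].
rewrite /four_copies windows_four_blocks ?size_map //.
have copy_ok g : affine g -> zigzag_curvatures (windows (map g M)) ks.
  by move=> g_aff; rewrite (affine_zigzag_curvatures g_aff).
move: (copy_ok _ a1) (copy_ok _ a2) (copy_ok _ a3) (copy_ok _ a4) => c1 c2 c3 c4.
by do 6 apply: zigzag_curvatures_cat => //.
Qed.

Definition body n : seq rat := flatten (map (numstring rat) (K n)).

Lemma body_step m : let: (l1, l2, l3) := seam_letters (odd m.+1) in
  body m.+3 = body m.+2 ++ numstring rat l1 ++ body m.+2 ++ numstring rat l2 ++
              body m.+2 ++ numstring rat l3 ++ body m.+2.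
Proof.
rewrite /body /K !subSS !subn0 /=.
by case: (odd m); rewrite /=; repeat rewrite (map_cat, flatten_cat) /=.
Qed.

(* [hilb m] is H_(m+1), whose curvature sequence is [1 :: body m.+1 ++ [:: 1]]. *)
Definition turns_invariant m := exists Mid,
  let u := gap m in let M := head_turns (odd m) u ++ Mid ++ tail_turns (odd m) u in
  infl (hilb rat m) = start_pt u (1, 1) :: M ++ [:: end_pt u (1, 1)] /\
  zigzag_curvatures (windows M) (body m.+1).

Lemma turns_invariant1 : turns_invariant 1.
Proof.
by exists (take 6 (drop 4 (infl (hilb rat 1)))); split; [apply/eqP|]; vm_compute.
Qed.

Lemma turns_invariantS m : turns_invariant m.+1 -> turns_invariant m.+2.
Proof.
move=> [Mid [inflE M_ok]].
have := four_copies_curvatures (gap_neq0 m.+1) M_ok; have := body_step m.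
case: seam_letters => [[l1 l2] l3] bodyE copies_ok.
have := infl_hilbS inflE; rewrite four_copiesE -gapS -oddS => inflE'.
rewrite four_copiesE -gapS -oddS -bodyE in copies_ok.
by eexists; split; [exact: inflE' | exact: copies_ok].
Qed.

Lemma turns_invariant_all m : turns_invariant m.+1.
Proof. by elim: m => [|m IHm]; [exact: turns_invariant1 | exact: turns_invariantS]. Qed.

Lemma caps_curvatures ev u : u != 0 ->
  zigzag_curvatures (windows (start_pt u (1, 1) :: head_turns ev u)) [:: 1] /\
  zigzag_curvatures (windows (tail_turns ev u ++ [:: end_pt u (1, 1)])) [:: 1].
Proof.
move=> u0; have h_aff o := homothety_affine o u0.
have startE l : map (start_pt u) l = map (homothety (0, 0) u) (map (start_pt 1) l).
  by rewrite -map_comp; apply: eq_map => d; exact: start_ptE.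
have endE l : map (end_pt u) l = map (homothety (1, 0) u) (map (end_pt 1) l).
  by rewrite -map_comp; apply: eq_map => d; exact: end_ptE.
rewrite -[_ :: head_turns ev u]/(map (start_pt u) ((1, 1) :: turn_offsets ev)).
rewrite /tail_turns -[[:: end_pt u _]]/(map (end_pt u) [:: (1, 1)]) -map_cat.
rewrite startE endE !(affine_zigzag_curvatures (h_aff _)).
by case: ev; split; vm_compute.
Qed.

Lemma hilb_curvatures m :
  zigzag_curvatures (windows (infl (hilb rat m.+1))) (expected rat m.+2).
Proof.
have [Mid [-> M_ok]] := turns_invariant_all m.
have [cap1 cap2] := caps_curvatures (odd m.+1) (gap_neq0 m.+1).
rewrite -[_ :: _]/([:: _] ++ _) -!catA windows_link ?size_map //.
rewrite -[expected _ _]/([:: 1] ++ body m.+2 ++ [:: 1]).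
by apply: zigzag_curvatures_cat cap1 _; apply: zigzag_curvatures_cat.
Qed.

End HilbertCurve.

Theorem mainTheorem10 (R : realFieldType) (n : nat) (a b c d e f : R) :
  (2 <= n)%N -> a * d - b * c != 0 ->
  let s := inflections (map (affmap a b c d e f) (hilbert R n)) in
  let N := size s in
  (forall k : nat, (2 <= k <= N - 2)%N ->
      bracket (tv s k.-1) (tv s k) != 0 /\ kappabar s k = 0) /\
  [seq kappa s k | k <- iota 2 (N - 3)] = expected R n.
Proof.
case: n => [|[|m]] // _ det.
pose h p := affmap a b c d e f (ratr_pt R p).
have h_bracket : bracket_morph ratr (a * d - b * c) h.
  by move=> p q p' q'; rewrite affmap_bracket_morph ratr_pt_bracket_morph mul1r.
have sE : inflections (map (affmap a b c d e f) (hilbert R m.+2)) =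
          map h (infl (hilb rat m.+1)).
  rewrite inflectionsE [hilbert _ _]hilb_ratr -map_comp.
  exact: (infl_map (bracket_morph_collinear det h_bracket)).
have /andP[zz /eqP kap] := hilb_curvatures m.
rewrite /= sE; split.
  by apply: kappabar_windows; rewrite (zigzags_map det h_bracket).
by rewrite kappa_windows (wkappas_map det h_bracket) kap expected_ratr.
Qed.
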